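(* Let $G$ be a cograph with (canonical) cotree $T_G$, and let $c$ be an inner vertex of $T_G$ with label $+$. Then the cograph $T_G(c)$ satisfies property $\mathcal{P}$ if and only if $c$ has at least two children in $T_G$ and either (i) there exist at least two children of $c$ in $T_G$ each of which is either a leaf or a vertex with label $\mathcal{R}$, or (ii) one of the children of $c$ is a vertex $u$ with label $\mathcal{R}$ such that $T_G(u)$ is the disjoint union of two complete graphs.
   Context: All graphs are finite and simple. For a graph $H$ and $v\in V(H)$, $N_H[v]$ denotes the closed neighbourhood of $v$. A set $D\subseteq V(H)$ is dominating if every vertex outside $D$ has a neighbour in $D$; $\gamma(H)$ is the minimum size of a dominating set. A dominating set $S$ is a secure dominating set if for every $x\in V(H)\setminus S$ there is a neighbour $y\in S$ of $x$ such that $(S\cup\{x\})\setminus\{y\}$ is dominating; $\gamma_s(H)$ is the minimum size of a secure dominating set. The join $G_1+G_2$ of disjoint graphs is their disjoint union together with all edges between $V(G_1)$ and $V(G_2)$. Cographs are defined recursively: $K_1$ is a cograph; the complement of a cograph is a cograph; the disjoint union of $k\ge 2$ cographs is a cograph. A cograph $G$ is represented by its cotree $T_G$: a rooted tree whose leaves are the vertices of $G$ and whose inner vertices are labelled $\cup$ or $+$, where the graph corresponding to an inner vertex is the disjoint union (label $\cup$) or the join (label $+$) of the graphs corresponding to its children; in this cotree the labels alternate, i.e. every child of a $\cup$-vertex is a leaf or a $+$-vertex, and every child of a $+$-vertex is a leaf or a $\cup$-vertex. For a vertex $v$ of $T_G$, $T_G(v)$ denotes the subgraph of $G$ induced by the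 leaves of the subtree of $T_G$ rooted at $v$. A vertex $u$ of $T_G$ has label $\mathcal{R}$ if (a) $u$ has label $\cup$, (b) $u$ has exactly two children $x,y$ in $T_G$, (c) $\gamma(T_G(x))=1$, and (d) $\gamma_s(T_G(y))=1$. A cograph $H$ which is the join of cographs $H_1,\dots,H_\ell$ with $\ell\ge 2$ satisfies property $\mathcal{P}$ if there exist two distinct vertices $x,y\in V(H)$ such that $\{x,y\}$ is a dominating set of $H$ and each of $V(H)\setminus N_H[x]$ and $V(H)\setminus N_H[y]$ is either empty or a clique (a set of vertices inducing a complete graph). *)

From Stdlib Require List.
From mathcomp Require Import all_boot.
Set Implicit Arguments. Unset Strict Implicit. Unset Printing Implicit Defensive.

Section Graphs.
Variable V : finType.
Variable e : rel V.

(* All notions below are for the induced subgraph of (V, e) on the vertex set S. *)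

Definition dominating (S D : {set V}) : bool :=
  (D \subset S) && [forall x in S :\: D, [exists y in D, e x y]].

Definition gamma (S : {set V}) : nat :=
  \big[minn/#|S|]_(D : {set V} | dominating S D) #|D|.

Definition secure_dominating (S D : {set V}) : bool :=
  dominating S D &&
  [forall x in S :\: D,
     [exists y in D, e x y && dominating S ((D :|: [set x]) :\ y)]].

Definition gamma_s (S : {set V}) : nat :=
  \big[minn/#|S|]_(D : {set V} | secure_dominating S D) #|D|.

Definition is_clique (A : {set V}) : Prop :=
  forall x y, x \in A -> y \in A -> x != y -> e x y.

Definition two_cliques (S : {set V}) : Prop :=
  exists A B : {set V},
    [/\ A != set0, B != set0, [disjoint A & B], A :|: B = S &
     [/\ is_clique A, is_clique B &
         forall a b, a \in A -> b \in B -> ~~ e a b]].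

Definition non_nbhd (S : {set V}) (z : V) : {set V} :=
  [set w in S | (w != z) && ~~ e z w].

Definition propP (S : {set V}) : Prop :=
  exists x y, [/\ x \in S, y \in S, x != y, dominating S [set x; y] &
   [/\ (non_nbhd S x = set0 \/ is_clique (non_nbhd S x)) &
    (non_nbhd S y = set0 \/ is_clique (non_nbhd S y))]].

End Graphs.

(* Cotrees: leaves are labelled by vertices; inner vertices carry a boolean
   label: true = '+' (join), false = 'cup' (disjoint union). *)
Inductive cotree (V : Type) : Type :=
| CLeaf of V
| CNode of bool & seq (cotree V).

Arguments CLeaf {V}.
Arguments CNode {V}.

Fixpoint leaves (V : Type) (t : cotree V) : seq V :=
  match t with
  | CLeaf v => [:: v]
  | CNode _ ch => flatten (map (@leaves V) ch)
  end.

(* vertex set of T_G(t) *)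
Definition leafset (V : finType) (t : cotree V) : {set V} := [set x | x \in leaves t].

(* s is a vertex of the tree t (i.e. the subtree rooted at a vertex of t) *)
Inductive is_subtree (V : Type) : cotree V -> cotree V -> Prop :=
| st_refl t : is_subtree t t
| st_child s b ch c : Stdlib.Lists.List.In c ch -> is_subtree s c -> is_subtree s (CNode b ch).

(* Canonical cotree T of the graph (V, e): the leaves are exactly the vertices
   (each once), every inner vertex has at least two children, labels
   alternate, and the graph of each inner vertex is the disjoint union
   (label false) / join (label true) of the graphs of its children, i.e.
   vertices in different children are adjacent iff the label is true. *)
Definition is_cotree (V : finType) (e : rel V) (T : cotree V) : Prop :=
  [/\ uniq (leaves T), (forall v : V, v \in leaves T) &
   forall b ch, is_subtree (CNode b ch) T ->
     [/\ 2 <= size ch,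
         (forall c, Stdlib.Lists.List.In c ch ->
            match c with CLeaf _ => True | CNode b' _ => b' = ~~ b end) &
         (forall i j x y, i < size ch -> j < size ch -> i <> j ->
            x \in leaves (nth (CNode b [::]) ch i) ->
            y \in leaves (nth (CNode b [::]) ch j) -> e x y = b)]].

Definition labelR (V : finType) (e : rel V) (u : cotree V) : Prop :=
  exists x y, u = CNode false [:: x; y] /\
    ((gamma e (leafset x) = 1 /\ gamma_s e (leafset y) = 1) \/
     (gamma e (leafset y) = 1 /\ gamma_s e (leafset x) = 1)).

Definition is_leaf (V : Type) (t : cotree V) : Prop :=
  match t with CLeaf _ => True | CNode _ _ => False end.

(* In the join c = c_1 + ... + c_k a vertex x of c_i is adjacent to every vertex outside c_i,
   so the non-neighbourhood of x is computed inside c_i, and {x, y} dominates as soon as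
   x and y lie in different children.  A child is a leaf or a disjoint union; inside a
   disjoint union non-neighbours of x in different parts are non-adjacent, so the
   non-neighbourhood of x is a clique exactly when there are two parts, x dominates its
   own part and the other part is a clique, i.e. when the child has label R.  If x and y
   lie in the same child, domination also forces them into different parts, and then both
   parts are cliques. *)

From Stdlib Require List.
From mathcomp Require Import all_boot order zify.
Set Implicit Arguments. Unset Strict Implicit. Unset Printing Implicit Defensive.
Import Order.TTheory.

Local Notation "ch `_ i" := (nth (CNode false [::]) ch i).

Section Domination.
Variables (V : finType) (e : rel V).
Hypothesis sym_e : symmetric e.
Implicit Types (S A B D : {set V}) (x y w : V).

Lemma bigmin_card_witness S (P : pred {set V}) :
  P S -> (forall D, P D -> D \subset S) ->
  exists2 D, P D & \big[minn/#|S|]_(D | P D) #|D| = #|D|.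
Proof.
move=> PS PsubS; rewrite -minEnat.
have [D PD ->] := eq_bigmin (x := #|S|) S P (fun D => #|D|) PS
  (fun D PD => subset_leq_card (PsubS D PD)).
by exists D.
Qed.

Lemma dominating_refl S : dominating e S S.
Proof. by rewrite /dominating subxx setDv; apply/forallP => x; rewrite inE. Qed.

Lemma secure_dominating_refl S : secure_dominating e S S.
Proof. by rewrite /secure_dominating dominating_refl setDv; apply/forallP => x; rewrite inE. Qed.

Lemma dominating_neq0 S D x : x \in S -> dominating e S D -> D != set0.
Proof.
move=> xS /andP[_ /forallP/(_ x)]; apply: contraTneq => ->.
by rewrite !inE xS /=; apply/existsP => -[y]; rewrite inE.
Qed.

Lemma dominating_set1P S x :
  x \in S -> reflect {in S, forall w, w != x -> e w x} (dominating e S [set x]).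
Proof.
move=> xS; rewrite /dominating sub1set xS /=.
apply: (iffP forallP) => [dom w wS wx | adj w].
  have /implyP := dom w; rewrite !inE wx wS => /(_ isT)/existsP[y].
  by rewrite inE => /andP[/eqP->].
apply/implyP; rewrite !inE => /andP[wx wS]; apply/existsP; exists x.
by rewrite inE eqxx adj.
Qed.

Lemma dominating_pairP S x y :
  reflect [/\ x \in S, y \in S & {in S, forall w, w != x -> w != y -> e w x || e w y}]
          (dominating e S [set x; y]).
Proof.
rewrite /dominating subUset !sub1set -andbA.
apply: (iffP and3P) => [[xS yS /forallP dom] | [xS yS adj]]; split=> //.
  move=> w wS wx wy; have /implyP := dom w; rewrite !inE negb_or wS wx wy => /(_ isT).
  by case/existsP=> z; rewrite !inE => /andP[/orP[]/eqP-> ->]; rewrite ?orbT.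
apply/forallP => w; apply/implyP; rewrite !inE negb_or => /andP[/andP[wx wy] wS].
apply/existsP; case/orP: (adj w wS wx wy) => [wx'|wy'].
  by exists x; rewrite !inE eqxx wx'.
by exists y; rewrite !inE eqxx orbT wy'.
Qed.

Lemma gamma_le S D : dominating e S D -> gamma e S <= #|D|.
Proof. by move=> domD; rewrite /gamma -minEnat -leEnat; apply: bigmin_le_cond. Qed.

Lemma gamma_s_le S D : secure_dominating e S D -> gamma_s e S <= #|D|.
Proof. by move=> secD; rewrite /gamma_s -minEnat -leEnat; apply: bigmin_le_cond. Qed.

Lemma gamma_witness S : exists2 D, dominating e S D & gamma e S = #|D|.
Proof. by apply: bigmin_card_witness (dominating_refl S) _ => D /andP[]. Qed.

Lemma gamma_s_witness S : exists2 D, secure_dominating e S D & gamma_s e S = #|D|.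
Proof. by apply: bigmin_card_witness (secure_dominating_refl S) _ => D /andP[/andP[]]. Qed.

Lemma gamma_eq1P S :
  gamma e S = 1 <-> exists2 x, x \in S & {in S, forall w, w != x -> e w x}.
Proof.
have [D domD gammaD] := gamma_witness S.
split=> [|[x xS /(dominating_set1P xS) domx]].
  rewrite gammaD => /eqP/cards1P[x Dx]; move: domD; rewrite Dx => domx.
  have xS : x \in S by case/andP: domx; rewrite sub1set.
  by exists x => //; apply/dominating_set1P.
apply/eqP; rewrite eqn_leq -{1}(cards1 x) gamma_le //= gammaD card_gt0.
exact: dominating_neq0 xS domD.
Qed.

Lemma secure_dominating_set1P S x :
  x \in S -> reflect (is_clique e S) (secure_dominating e S [set x]).
Proof.
move=> xS; apply: (iffP andP) => [[_ /forallP sec] | clS].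
  have adj w z : w \in S -> z \in S -> z != x -> w != z -> e w z.
    move=> wS zS zx wz; have /implyP := sec z; rewrite !inE zS zx => /(_ isT).
    case/existsP=> y; rewrite inE => /andP[/eqP-> /andP[_]].
    have x_nz : x \notin [set z] by rewrite inE eq_sym.
    by rewrite setU1K // => /(dominating_set1P zS)/(_ w wS wz).
  move=> w z wS zS wz; have [zx | zx] := eqVneq z x; last exact: adj.
  by subst z; rewrite sym_e adj // eq_sym.
split; first by apply/(dominating_set1P xS) => w wS wx; apply: clS.
apply/forallP => z; apply/implyP; rewrite !inE => /andP[zx zS].
apply/existsP; exists x; rewrite inE eqxx clS //= setU1K; last by rewrite inE eq_sym.
by apply/(dominating_set1P zS) => w wS wz; apply: clS.
Qed.

Lemma gamma_s_eq1P S : gamma_s e S = 1 <-> S != set0 /\ is_clique e S.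
Proof.
have [D secD gammaD] := gamma_s_witness S.
split=> [|[/set0Pn[x xS] clS]].
  rewrite gammaD => /eqP/cards1P[x Dx]; move: secD; rewrite Dx => secx.
  have xS : x \in S by case/andP: secx => /andP[]; rewrite sub1set.
  by split; [apply/set0Pn; exists x | apply/(secure_dominating_set1P xS)].
have secx : secure_dominating e S [set x] by apply/secure_dominating_set1P.
apply/eqP; rewrite eqn_leq -{1}(cards1 x) gamma_s_le //= gammaD card_gt0.
by case/andP: secD => /(dominating_neq0 xS).
Qed.

Lemma set0_or_clique A : A = set0 \/ is_clique e A -> is_clique e A.
Proof. by case=> // -> x y; rewrite inE. Qed.

Lemma sub_clique A B : A \subset B -> is_clique e B -> is_clique e A.
Proof. by move=> /subsetP AB clB x y /AB xB /AB yB; apply: clB. Qed.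

Lemma non_nbhd_sub S A B x :
  S \subset A :|: B -> {in A, forall w, w != x -> e x w} -> non_nbhd e S x \subset B.
Proof.
move=> /subsetP SAB adjA; apply/subsetP => w; rewrite inE => /and3P[/SAB wAB wx nxw].
by case/setUP: wAB => // wA; rewrite adjA in nxw.
Qed.

Lemma clique_cover_non_nbhd S A B x : S = A :|: B -> x \in A ->
  is_clique e A -> is_clique e B -> is_clique e (non_nbhd e S x).
Proof.
move=> SAB xA clA; apply: sub_clique; apply: (non_nbhd_sub (A := A)) => [|w wA wx].
  by rewrite SAB.
by apply: clA; rewrite // eq_sym.
Qed.

Lemma gamma_eq1_clique_non_nbhd S A B :
  S \subset A :|: B -> gamma e A = 1 -> gamma_s e B = 1 ->
  exists2 x, x \in A & is_clique e (non_nbhd e S x).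
Proof.
move=> SAB /gamma_eq1P[x xA adj] /gamma_s_eq1P[_ clB]; exists x => //.
apply: sub_clique clB; apply: non_nbhd_sub SAB _ => w wA wx.
by rewrite sym_e adj.
Qed.

End Domination.

Lemma In_nthP (T : Type) (x0 : T) (s : seq T) x :
  List.In x s <-> exists2 i, i < size s & nth x0 s i = x.
Proof.
elim: s x => [|y s IHs] x /=; first by split=> // -[].
split=> [[<- | /IHs[i lt_i <-]] | [[|i] /= lt_i <-]].
- by exists 0.
- by exists i.+1.
- by left.
- by right; apply/IHs; exists i.
Qed.

Section CotreeInd.
Variables (V : Type) (P : cotree V -> Prop).
Hypothesis P_leaf : forall v, P (CLeaf v).
Hypothesis P_node : forall b ch, (forall c, List.In c ch -> P c) -> P (CNode b ch).

Fixpoint cotree_nested_ind t : P t :=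
  match t with
  | CLeaf v => P_leaf v
  | CNode b ch => P_node b
      ((fix all_in ch : forall c, List.In c ch -> P c :=
          match ch with
          | [::] => fun c (F : False) => match F with end
          | c' :: ch' => fun c in_c =>
              match in_c with
              | or_introl E => eq_ind c' P (cotree_nested_ind c') c E
              | or_intror in_c' => all_in ch' c in_c'
              end
          end) ch)
  end.

End CotreeInd.

Section Leaves.
Variable V : eqType.
Implicit Types (s t : cotree V) (ch : seq (cotree V)) (x : V).

Lemma node_leavesP b ch x :
  reflect (exists2 i, i < size ch & x \in leaves ch`_i) (x \in leaves (CNode b ch)).
Proof.
have -> : x \in leaves (CNode b ch) = has (fun c => x \in leaves c) ch.
  by elim: ch => //= c ch IHch; rewrite mem_cat IHch.
exact: has_nthP.
Qed.

Lemma mem_leaves_nth b ch i x :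
  i < size ch -> x \in leaves ch`_i -> x \in leaves (CNode b ch).
Proof. by move=> lt_i x_i; apply/node_leavesP; exists i. Qed.

Lemma subtree_trans s t r : is_subtree s t -> is_subtree t r -> is_subtree s r.
Proof.
by move=> st tr; elim: tr st => // {}t b ch c c_ch _ IH st; apply: st_child c_ch (IH st).
Qed.

Lemma subtree_nth b ch i : i < size ch -> is_subtree ch`_i (CNode b ch).
Proof. by move=> lt_i; apply: st_child (st_refl _); apply/In_nthP; exists i. Qed.

Lemma subtree_uniq_leaves s t : is_subtree s t -> uniq (leaves t) -> uniq (leaves s).
Proof.
elim=> // {}s b ch c c_ch _ IH uniq_ch; apply: IH; move: uniq_ch c_ch => /=.
elim: ch => //= c' ch IHch; rewrite cat_uniq => /and3P[uniq_c' _ uniq_ch] [<- | c_ch] //.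
exact: IHch.
Qed.

Lemma leaves_nth_disjoint b ch i j x :
  uniq (leaves (CNode b ch)) -> i < size ch -> j < size ch -> i <> j ->
  x \in leaves ch`_i -> x \notin leaves ch`_j.
Proof.
elim: ch i j => //= c ch IHch [|i] [|j] //=;
  rewrite cat_uniq !ltnS => /and3P[_ disj uniq_ch] lt_i lt_j neq_ij.
- move=> x_c; apply: contra disj => x_j; apply/hasP; exists x => //.
  exact: (mem_leaves_nth b lt_j x_j).
- move=> x_i; apply: contra disj => x_c; apply/hasP; exists x => //.
  exact: (mem_leaves_nth b lt_i x_i).
- by apply: IHch => //; congruence.
Qed.

End Leaves.

Section Cotree.
Variables (V : finType) (e : rel V) (T : cotree V).
Hypothesis cotreeT : is_cotree e T.
Implicit Types (s : cotree V) (ch : seq (cotree V)) (x y : V).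

Lemma cotree_uniq s : is_subtree s T -> uniq (leaves s).
Proof. by case: cotreeT => uniqT _ _ sT; apply: subtree_uniq_leaves sT uniqT. Qed.

Lemma cotree_size_ch b ch : is_subtree (CNode b ch) T -> 1 < size ch.
Proof. by case: cotreeT => _ _ /(_ b ch) H /H[]. Qed.

Lemma cotree_subtree_nth b ch i :
  is_subtree (CNode b ch) T -> i < size ch -> is_subtree ch`_i T.
Proof. by move=> nodeT lt_i; apply: subtree_trans (subtree_nth b lt_i) nodeT. Qed.

Lemma cotree_label_nth b ch i : is_subtree (CNode b ch) T -> i < size ch ->
  if ch`_i is CNode b' _ then b' = ~~ b else True.
Proof.
case: cotreeT => _ _ /(_ b ch) H /H[_ label _] lt_i.
by apply: label; apply/(In_nthP (CNode false [::])); exists i.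
Qed.

Lemma cotree_edge_nth b ch i j x y :
  is_subtree (CNode b ch) T -> i < size ch -> j < size ch -> i <> j ->
  x \in leaves ch`_i -> y \in leaves ch`_j -> e x y = b.
Proof.
case: cotreeT => _ _ /(_ b ch) H /H[_ _ edge] lt_i lt_j neq_ij x_i y_j.
by apply: (edge i j); rewrite // (set_nth_default (CNode false [::])).
Qed.

Lemma cotree_nth_neq b ch i j x y :
  is_subtree (CNode b ch) T -> i < size ch -> j < size ch -> i <> j ->
  x \in leaves ch`_i -> y \in leaves ch`_j -> x != y.
Proof.
move=> nodeT lt_i lt_j neq_ij x_i; apply: contraTneq => <-.
exact: leaves_nth_disjoint (cotree_uniq nodeT) lt_i lt_j neq_ij x_i.
Qed.

Lemma cotree_leaf_exists s : is_subtree s T -> exists x, x \in leaves s.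
Proof.
elim/cotree_nested_ind: s => [v _ | b ch IHch nodeT]; first by exists v; rewrite inE.
have lt_0 : 0 < size ch by apply: ltn_trans (cotree_size_ch nodeT).
have in_0 : List.In ch`_0 ch by apply/In_nthP; exists 0.
have [x x_0] := IHch _ in_0 (cotree_subtree_nth nodeT lt_0).
by exists x; apply: mem_leaves_nth x_0.
Qed.

Lemma cotree_nth_leaf_exists b ch i :
  is_subtree (CNode b ch) T -> i < size ch -> exists x, x \in leaves ch`_i.
Proof. by move=> nodeT lt_i; apply/cotree_leaf_exists/(cotree_subtree_nth nodeT lt_i). Qed.

End Cotree.

Lemma exists_neq_ltn n a : 1 < n -> exists2 b, b < n & b <> a.
Proof. by move=> lt1n; exists (a == 0); [case: (a == 0); lia | case: a]. Qed.

Section UnionNode.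
Variables (V : finType) (e : rel V) (T : cotree V).
Hypothesis sym_e : symmetric e.
Hypothesis cotreeT : is_cotree e T.
Variable ch : seq (cotree V).
Hypothesis unionT : is_subtree (CNode false ch) T.
Local Notation U := (leafset (CNode false ch)).
Implicit Types (x y w : V).

Lemma union_mem_non_nbhd a b x w : a < size ch -> b < size ch -> a <> b ->
  x \in leaves ch`_a -> w \in leaves ch`_b -> w \in non_nbhd e U x.
Proof.
move=> lt_a lt_b neq_ab x_a w_b; rewrite !inE (mem_leaves_nth false lt_b w_b).
rewrite (cotree_nth_neq cotreeT unionT lt_b lt_a (nesym neq_ab) w_b x_a).
by rewrite (cotree_edge_nth cotreeT unionT lt_a lt_b neq_ab x_a w_b).
Qed.

Lemma union_nth_sub_non_nbhd a b x : a < size ch -> b < size ch -> a <> b ->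
  x \in leaves ch`_a -> leafset ch`_b \subset non_nbhd e U x.
Proof.
move=> lt_a lt_b neq_ab x_a; apply/subsetP => w; rewrite inE.
exact: (union_mem_non_nbhd lt_a lt_b neq_ab x_a).
Qed.

Lemma union_clique_non_nbhd_nth x b c w w' :
  is_clique e (non_nbhd e U x) -> b < size ch -> c < size ch ->
  w \in leaves ch`_b -> w' \in leaves ch`_c ->
  w \in non_nbhd e U x -> w' \in non_nbhd e U x -> b = c.
Proof.
move=> clx lt_b lt_c w_b w'_c w_nn w'_nn; apply/eqP/negPn/negP => /eqP neq_bc.
have := clx w w' w_nn w'_nn (cotree_nth_neq cotreeT unionT lt_b lt_c neq_bc w_b w'_c).
by rewrite (cotree_edge_nth cotreeT unionT lt_b lt_c neq_bc w_b w'_c).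
Qed.

Lemma union_size2 a x : a < size ch -> x \in leaves ch`_a ->
  is_clique e (non_nbhd e U x) -> size ch = 2.
Proof.
move=> lt_a x_a clx.
have same_other b c : b < size ch -> c < size ch -> b <> a -> c <> a -> b = c.
  move=> lt_b lt_c neq_ba neq_ca.
  have [w w_b] := cotree_nth_leaf_exists cotreeT unionT lt_b.
  have [w' w'_c] := cotree_nth_leaf_exists cotreeT unionT lt_c.
  apply: (union_clique_non_nbhd_nth clx lt_b lt_c w_b w'_c).
    exact: union_mem_non_nbhd lt_a lt_b (nesym neq_ba) x_a w_b.
  exact: union_mem_non_nbhd lt_a lt_c (nesym neq_ca) x_a w'_c.
apply/eqP; rewrite eqn_leq (cotree_size_ch cotreeT unionT) andbT leqNgt.
apply/negP => lt2; move: same_other.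
by case: a {lt_a x_a clx} => [|[|a]] same;
  [have := same 1 2 | have := same 0 2 | have := same 0 1]; lia.
Qed.

Lemma union_dominates_own_child a x : a < size ch -> x \in leaves ch`_a ->
  is_clique e (non_nbhd e U x) -> {in leaves ch`_a, forall w, w != x -> e x w}.
Proof.
move=> lt_a x_a clx w w_a wx; apply/negPn/negP => nxw.
have [b lt_b neq_ba] := exists_neq_ltn a (cotree_size_ch cotreeT unionT).
have [w' w'_b] := cotree_nth_leaf_exists cotreeT unionT lt_b.
have w_nn : w \in non_nbhd e U x by rewrite !inE (mem_leaves_nth false lt_a w_a) wx.
have w'_nn := union_mem_non_nbhd lt_a lt_b (nesym neq_ba) x_a w'_b.
exact: neq_ba (union_clique_non_nbhd_nth clx lt_b lt_a w'_b w_a w'_nn w_nn).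
Qed.

Lemma union_labelR x :
  x \in leaves (CNode false ch) -> is_clique e (non_nbhd e U x) -> labelR e (CNode false ch).
Proof.
case/node_leavesP => a lt_a x_a clx.
have size2 := union_size2 lt_a x_a clx.
have gamma_a : gamma e (leafset ch`_a) = 1.
  apply/gamma_eq1P; exists x; first by rewrite inE.
  move=> w; rewrite inE => w_a wx; rewrite sym_e.
  exact: union_dominates_own_child lt_a x_a clx w w_a wx.
have gamma_s_other b : b < size ch -> b <> a -> gamma_s e (leafset ch`_b) = 1.
  move=> lt_b neq_ba; apply/(gamma_s_eq1P sym_e); split.
    have [w w_b] := cotree_nth_leaf_exists cotreeT unionT lt_b.
    by apply/set0Pn; exists w; rewrite inE.
  exact: sub_clique (union_nth_sub_non_nbhd lt_a lt_b (nesym neq_ba) x_a) clx.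
have -> : ch = [:: ch`_0; ch`_1] by case: (ch) size2 => [|? [|? []]].
exists ch`_0, ch`_1; split=> //.
move: lt_a gamma_a gamma_s_other; rewrite size2.
case: a {x_a clx} => [|[|//]] _ gamma_a gamma_s_other.
- by left; split; last exact: gamma_s_other.
- by right; split; last exact: gamma_s_other.
Qed.

Lemma union_children_cover a b x y :
  a < size ch -> b < size ch -> x \in leaves ch`_a -> y \in leaves ch`_b ->
  {in leaves (CNode false ch), forall w, w != x -> w != y -> e w x || e w y} ->
  forall k, k < size ch -> k = a \/ k = b.
Proof.
move=> lt_a lt_b x_a y_b dom k lt_k.
have [-> | /eqP neq_ka] := eqVneq k a; first by left.
have [-> | /eqP neq_kb] := eqVneq k b; first by right.
have [w w_k] := cotree_nth_leaf_exists cotreeT unionT lt_k.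
have := union_mem_non_nbhd lt_a lt_k (nesym neq_ka) x_a w_k; rewrite inE => /and3P[_ wx nxw].
have := union_mem_non_nbhd lt_b lt_k (nesym neq_kb) y_b w_k; rewrite inE => /and3P[_ wy nyw].
have := dom w (mem_leaves_nth false lt_k w_k) wx wy.
by rewrite [e w x]sym_e [e w y]sym_e (negbTE nxw) (negbTE nyw).
Qed.

Lemma union_two_cliques a b x y :
  a < size ch -> b < size ch -> x \in leaves ch`_a -> y \in leaves ch`_b ->
  {in leaves (CNode false ch), forall w, w != x -> w != y -> e w x || e w y} ->
  is_clique e (non_nbhd e U x) -> is_clique e (non_nbhd e U y) -> two_cliques e U.
Proof.
move=> lt_a lt_b x_a y_b dom clx cly.
have cover := union_children_cover lt_a lt_b x_a y_b dom.
have neq_ab : a <> b.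
  move=> eq_ab; subst b.
  have [k lt_k neq_ka] := exists_neq_ltn a (cotree_size_ch cotreeT unionT).
  by case: (cover k lt_k).
have leafset_neq0 k : k < size ch -> leafset ch`_k != set0.
  move=> lt_k; have [w w_k] := cotree_nth_leaf_exists cotreeT unionT lt_k.
  by apply/set0Pn; exists w; rewrite inE.
exists (leafset ch`_a), (leafset ch`_b); split; try exact: leafset_neq0.
- apply/pred0P => w /=; rewrite !inE; apply/negP => /andP[w_a w_b].
  by have := cotree_nth_neq cotreeT unionT lt_a lt_b neq_ab w_a w_b; rewrite eqxx.
- apply/setP => w; rewrite !inE; apply/orP/node_leavesP => [[w_a | w_b] | [k lt_k w_k]].
  + by exists a.
  + by exists b.
  + by case: (cover k lt_k) => <-; [left | right].
split.
- exact: sub_clique (union_nth_sub_non_nbhd lt_b lt_a (nesym neq_ab) y_b) cly.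
- exact: sub_clique (union_nth_sub_non_nbhd lt_a lt_b neq_ab x_a) clx.
- move=> p q; rewrite !inE => p_a q_b.
  by rewrite (cotree_edge_nth cotreeT unionT lt_a lt_b neq_ab p_a q_b).
Qed.

End UnionNode.

Lemma labelR_clique_non_nbhd (V : finType) (e : rel V) (u : cotree V) :
  symmetric e -> labelR e u ->
  exists2 x, x \in leaves u & is_clique e (non_nbhd e (leafset u) x).
Proof.
move=> sym_e [c [d [-> gammas]]].
have sub_cd : leafset (CNode false [:: c; d]) \subset leafset c :|: leafset d.
  by apply/subsetP => w; rewrite !inE /= cats0 mem_cat.
case: gammas => [[gamma_c gamma_s_d] | [gamma_d gamma_s_c]].
- have [x x_c clx] := gamma_eq1_clique_non_nbhd sym_e sub_cd gamma_c gamma_s_d.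
  by exists x => //; move: x_c; rewrite inE /= mem_cat => ->.
- rewrite setUC in sub_cd.
  have [x x_d clx] := gamma_eq1_clique_non_nbhd sym_e sub_cd gamma_d gamma_s_c.
  by exists x => //; move: x_d; rewrite inE /= cats0 mem_cat => ->; rewrite orbT.
Qed.

Definition leaf_or_labelR (V : finType) (e : rel V) (c : cotree V) : Prop :=
  is_leaf c \/ labelR e c.

Section JoinNode.
Variables (V : finType) (e : rel V) (T : cotree V).
Hypothesis sym_e : symmetric e.
Hypothesis cotreeT : is_cotree e T.
Variable ch : seq (cotree V).
Hypothesis joinT : is_subtree (CNode true ch) T.
Local Notation S := (leafset (CNode true ch)).
Implicit Types (x y w : V).

Lemma join_non_nbhd i x : i < size ch -> x \in leaves ch`_i ->
  non_nbhd e S x = non_nbhd e (leafset ch`_i) x.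
Proof.
move=> lt_i x_i; apply/setP => w; rewrite !inE.
have [w_i | w_ni] := boolP (w \in leaves ch`_i); first by rewrite (mem_leaves_nth true lt_i w_i).
apply/negbTE; apply/andP => -[/node_leavesP[k lt_k w_k] /andP[_]].
have neq_ik : i <> k by move=> eq_ik; rewrite eq_ik w_k in w_ni.
by rewrite (cotree_edge_nth cotreeT joinT lt_i lt_k neq_ik x_i w_k).
Qed.

Lemma join_dominating i x y : i < size ch -> x \in leaves ch`_i -> y \in S ->
  {in leaves ch`_i, forall w, w != x -> w != y -> e w x || e w y} ->
  dominating e S [set x; y].
Proof.
move=> lt_i x_i yS dom_i; apply/dominating_pairP; split=> //.
  by rewrite inE (mem_leaves_nth true lt_i x_i).
move=> w; rewrite inE => /node_leavesP[k lt_k w_k] wx wy.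
have [eq_ki | /eqP neq_ki] := eqVneq k i; first by apply: dom_i; rewrite // -eq_ki.
by rewrite (cotree_edge_nth cotreeT joinT lt_k lt_i neq_ki w_k x_i).
Qed.

Lemma clique_non_nbhd_leaf_or_labelR i x : i < size ch -> x \in leaves ch`_i ->
  is_clique e (non_nbhd e S x) -> leaf_or_labelR e ch`_i.
Proof.
move=> lt_i x_i; rewrite (join_non_nbhd lt_i x_i).
move: (cotree_label_nth cotreeT joinT lt_i) (cotree_subtree_nth joinT lt_i) x_i.
case: ch`_i => [v _ _ _ | [] ch' // _ unionT x_u clx]; first by left.
by right; exact: (union_labelR sym_e cotreeT unionT x_u clx).
Qed.

Lemma leaf_or_labelR_clique_non_nbhd i : i < size ch -> leaf_or_labelR e ch`_i ->
  exists2 x, x \in leaves ch`_i & is_clique e (non_nbhd e S x).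
Proof.
move=> lt_i u_i.
suff [x x_i clx] : exists2 x, x \in leaves ch`_i & is_clique e (non_nbhd e (leafset ch`_i) x).
  by exists x; rewrite // (join_non_nbhd lt_i x_i).
case: ch`_i u_i => [v _ | b ch' [[] | /(labelR_clique_non_nbhd sym_e)]] //.
exists v; first by rewrite inE.
by move=> p q; rewrite !inE => /andP[/eqP->]; rewrite eqxx.
Qed.

Lemma propP_distinct_children i j : i < size ch -> j < size ch -> i <> j ->
  leaf_or_labelR e ch`_i -> leaf_or_labelR e ch`_j -> propP e S.
Proof.
move=> lt_i lt_j neq_ij u_i u_j.
have [x x_i clx] := leaf_or_labelR_clique_non_nbhd lt_i u_i.
have [y y_j cly] := leaf_or_labelR_clique_non_nbhd lt_j u_j.
have yS : y \in S by rewrite inE (mem_leaves_nth true lt_j y_j).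
exists x, y; split=> //; last by split; right.
- by rewrite inE (mem_leaves_nth true lt_i x_i).
- exact: (cotree_nth_neq cotreeT joinT lt_i lt_j neq_ij x_i y_j).
- apply: (join_dominating lt_i x_i yS) => w w_i _ _.
  by rewrite (cotree_edge_nth cotreeT joinT lt_i lt_j neq_ij w_i y_j) orbT.
Qed.

Lemma propP_two_cliques_child i : i < size ch -> two_cliques e (leafset ch`_i) -> propP e S.
Proof.
move=> lt_i [A [B [/set0Pn[x xA] /set0Pn[y yB] disjAB leafset_i [clA clB _]]]].
have in_i w : w \in A :|: B -> w \in leaves ch`_i by rewrite leafset_i inE.
have x_i : x \in leaves ch`_i by apply: in_i; rewrite inE xA.
have y_i : y \in leaves ch`_i by apply: in_i; rewrite inE yB orbT.
have yS : y \in S by rewrite inE (mem_leaves_nth true lt_i y_i).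
exists x, y; split=> //.
- by rewrite inE (mem_leaves_nth true lt_i x_i).
- by apply: contraTneq yB => <-; rewrite (disjointFr disjAB xA).
- apply: (join_dominating lt_i x_i yS) => w w_i wx wy.
  have : w \in A :|: B by rewrite leafset_i inE.
  by case/setUP => [wA | wB]; [rewrite (clA w x) | rewrite (clB w y) ?orbT].
split; right.
- rewrite (join_non_nbhd lt_i x_i).
  exact: clique_cover_non_nbhd (esym leafset_i) xA clA clB.
- rewrite (join_non_nbhd lt_i y_i).
  by apply: clique_cover_non_nbhd yB clB clA; rewrite -leafset_i setUC.
Qed.

Lemma same_child_labelR_two_cliques i x y : i < size ch ->
  x \in leaves ch`_i -> y \in leaves ch`_i -> x != y -> dominating e S [set x; y] ->
  is_clique e (non_nbhd e S x) -> is_clique e (non_nbhd e S y) ->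
  labelR e ch`_i /\ two_cliques e (leafset ch`_i).
Proof.
move=> lt_i x_i y_i neq_xy /dominating_pairP[_ _ dom].
rewrite (join_non_nbhd lt_i x_i) (join_non_nbhd lt_i y_i) => clx cly.
have dom_i : {in leaves ch`_i, forall w, w != x -> w != y -> e w x || e w y}.
  by move=> w w_i; apply: dom; rewrite inE (mem_leaves_nth true lt_i w_i).
move: x_i y_i neq_xy dom_i clx cly.
move: (cotree_label_nth cotreeT joinT lt_i) (cotree_subtree_nth joinT lt_i).
case: ch`_i => [v _ _ | [] ch' // _ unionT x_u y_u _ dom_u clx cly].
  by rewrite !inE => /eqP-> /eqP->; rewrite eqxx.
split; first exact: (union_labelR sym_e cotreeT unionT x_u clx).
case/node_leavesP: x_u => a lt_a x_a; case/node_leavesP: y_u => b lt_b y_b.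
exact: (union_two_cliques sym_e cotreeT unionT lt_a lt_b x_a y_b dom_u clx cly).
Qed.

End JoinNode.

Theorem lemma3 (V : finType) (e : rel V) (esym : symmetric e) (eirr : irreflexive e)
  (T : cotree V) (HT : is_cotree e T) (ch : seq (cotree V))
  (Hc : is_subtree (CNode true ch) T) :
  propP e (leafset (CNode true ch)) <->
  (2 <= size ch /\
   ((exists i j, [/\ i < size ch, j < size ch, i <> j,
        is_leaf (nth (CNode false [::]) ch i) \/ labelR e (nth (CNode false [::]) ch i) &
        is_leaf (nth (CNode false [::]) ch j) \/ labelR e (nth (CNode false [::]) ch j)])
    \/ (exists u, Stdlib.Lists.List.In u ch /\ labelR e u /\ two_cliques e (leafset u)))).
Proof.
split=> [[x [y [xS yS neq_xy dom [/set0_or_clique clx /set0_or_clique cly]]]] |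
         [_ [[i [j [lt_i lt_j neq_ij u_i u_j]]] | [u [u_ch [_ two_u]]]]]].
- split; first exact: (cotree_size_ch HT Hc).
  move: xS yS; rewrite !inE => /node_leavesP[i lt_i x_i] /node_leavesP[j lt_j y_j].
  have [eq_ij | /eqP neq_ij] := eqVneq i j; last first.
    left; exists i, j; split=> //.
    - exact: (clique_non_nbhd_leaf_or_labelR esym HT Hc lt_i x_i clx).
    - exact: (clique_non_nbhd_leaf_or_labelR esym HT Hc lt_j y_j cly).
  subst j; right; exists ch`_i; split; first by apply/In_nthP; exists i.
  exact: (same_child_labelR_two_cliques esym HT Hc lt_i x_i y_j neq_xy dom clx cly).
- exact: (propP_distinct_children esym HT Hc lt_i lt_j neq_ij u_i u_j).
- have [i lt_i eq_u] := (In_nthP (CNode false [::]) ch u).1 u_ch.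
  by rewrite -eq_u in two_u; exact: (propP_two_cliques_child HT Hc lt_i two_u).
Qed.
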